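(* With $F_n$ as defined in the context, $$\int_{1+(\log n)^{-1}}^{\infty}F_n(w)\,dw=O(n\log\log n)\qquad(n\to\infty).$$
   Context: For $w>0$ and integer $n\ge1$ let $a_n(w)=\sum_{j=0}^n w^j$, $b_n(w)=\sum_{j=1}^n jw^j$, $c_n(w)=\sum_{j=0}^n j^2w^j$, and $$F_n(w)=\frac{1}{2\sqrt{w}}\sqrt{\frac{c_n(w)}{a_n(w)}}\sqrt{\frac{a_n(w)c_n(w)-b_n(w)^2}{w\,a_n(w)^2}}.$$ $\log$ is the natural logarithm. *)

From HB Require Import structures.
From mathcomp Require Import all_boot all_order all_algebra.
From mathcomp Require Import all_classical all_reals all_analysis.
Set Implicit Arguments. Unset Strict Implicit. Unset Printing Implicit Defensive.
Import Order.TTheory GRing.Theory Num.Theory.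
Local Open Scope ring_scope.

Section Defs.
Variable R : realType.

Definition an (n : nat) (w : R) : R := \sum_(0 <= j < n.+1) w ^+ j.
Definition bn (n : nat) (w : R) : R := \sum_(1 <= j < n.+1) j%:R * w ^+ j.
Definition cn (n : nat) (w : R) : R := \sum_(0 <= j < n.+1) (j%:R) ^+ 2 * w ^+ j.

Definition Fn (n : nat) (w : R) : R :=
  (2 * Num.sqrt w)^-1 * Num.sqrt (cn n w / an n w) *
  Num.sqrt ((an n w * cn n w - bn n w ^+ 2) / (w * an n w ^+ 2)).
End Defs.

From HB Require Import structures.
From mathcomp Require Import all_boot all_order all_algebra.
From mathcomp Require Import all_classical all_reals all_analysis.
From mathcomp Require Import ring lra.
Import Order.TTheory GRing.Theory Num.Theory.
Import numFieldNormedType.Exports.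
Set Implicit Arguments. Unset Strict Implicit. Unset Printing Implicit Defensive.
Local Open Scope ring_scope.
Local Open Scope classical_set_scope.

(* Weighting [j] by [w^j / a], [c/a] is the mean of [j^2 <= n^2] and
   [(a c - b^2)/a^2] is the variance of [j], at most its second moment about [n]; the
   closed forms of the power sums bound the latter by [4 w / (w - 1)^2] as soon as
   [w^(n+1) >= 2], which holds on the whole range by Bernoulli's inequality.  Hence
   [F_n(w) <= n / (sqrt w (w - 1))], a function with primitive
   [n ln((sqrt w - 1)/(sqrt w + 1))].  Its integral from [1 + 1/L] to infinity is at most
   [4 n ln L], and [L = ln n] gives the bound [4 n ln ln n]. *)

(* Unlike [ge0_le_integral], no measurability is needed: both integrals are suprema over
   simple minorants. *)
Lemma ge0_le_integral_nomeas d (T : measurableType d) (R : realType)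
    (mu : {measure set T -> \bar R}) (D : set T) (f g : T -> \bar R) :
  (forall x, D x -> 0 <= f x)%E -> (forall x, D x -> f x <= g x)%E ->
  (\int[mu]_(x in D) f x <= \int[mu]_(x in D) g x)%E.
Proof.
move=> f0 fg.
have g0 x : D x -> (0 <= g x)%E by move=> Dx; exact: le_trans (f0 x Dx) (fg x Dx).
rewrite !ge0_integralE //; apply: ereal_sup_le => _ [h hf <-].
by exists h => //= x; apply: le_trans (hf x) _; exact: lee_restrict.
Qed.

Lemma bernoulli_ineq (R : realDomainType) (x : R) k :
  0 <= x -> 1 + k%:R * x <= (1 + x) ^+ k.
Proof.
move=> x0; elim: k => [|k IH]; first by rewrite mul0r addr0 expr0.
have kx0 : 0 <= k%:R * x by rewrite mulr_ge0.
rewrite exprS -natr1; nra.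
Qed.

Section Fn_majorant.
Variable R : realType.
Implicit Types (n : nat) (w : R).

Lemma an_closed_form n w : (w - 1) * an n w = w ^+ n.+1 - 1.
Proof.
elim: n => [|n IH]; first by rewrite /an big_nat1; ring.
have -> : an n.+1 w = an n w + w ^+ n.+1 by rewrite /an big_nat_recr.
by rewrite mulrDr IH [w ^+ n.+2]exprS; ring.
Qed.

Lemma bn_closed_form n w :
  (w - 1) ^+ 2 * bn n w = n%:R * w ^+ n.+2 - n.+1%:R * w ^+ n.+1 + w.
Proof.
elim: n => [|n IH]; first by rewrite /bn big_geq //; ring.
have -> : bn n.+1 w = bn n w + n.+1%:R * w ^+ n.+1 by rewrite /bn big_nat_recr.
by rewrite mulrDr IH [w ^+ n.+3]exprS [w ^+ n.+2]exprS -!natr1; ring.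
Qed.

Lemma cn_closed_form n w : let P := w ^+ n.+1 in
  (w - 1) ^+ 3 * cn n w =
  w * P + P - (n.+1%:R * w - n%:R) ^+ 2 - w
  - n%:R ^+ 2 * (w - 1) ^+ 2 * (P - 1)
  + 2 * n%:R * (w - 1) * (n%:R * w * P - n.+1%:R * P + w).
Proof.
elim: n => [|n IH]; first by rewrite /cn big_nat1; ring.
have -> : cn n.+1 w = cn n w + n.+1%:R ^+ 2 * w ^+ n.+1 by rewrite /cn big_nat_recr.
by rewrite mulrDr IH [w ^+ n.+2]exprS -!natr1; ring.
Qed.

(* [dn n w] is [\sum_(0 <= j < n.+1) (n - j)^2 w^j], the second moment about [n]. *)
Definition dn n w := n%:R ^+ 2 * an n w - 2 * n%:R * bn n w + cn n w.

Lemma dn_closed_form n w :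
  (w - 1) ^+ 3 * dn n w =
  (w + 1) * w ^+ n.+1 - ((n.+1%:R * w - n%:R) ^+ 2 + w).
Proof.
have ha := an_closed_form n w; have hb := bn_closed_form n w.
have -> : (w - 1) ^+ 3 * dn n w = n%:R ^+ 2 * (w - 1) ^+ 2 * ((w - 1) * an n w)
    - 2 * n%:R * (w - 1) * ((w - 1) ^+ 2 * bn n w) + (w - 1) ^+ 3 * cn n w.
  by rewrite /dn; ring.
by rewrite ha hb cn_closed_form [w ^+ n.+2]exprS; ring.
Qed.

Lemma an_gt0 n w : 0 <= w -> 0 < an n w.
Proof.
move=> w0; rewrite /an big_nat_recl // expr0 (lt_le_trans ltr01) // lerDl.
by apply: sumr_ge0 => j _; exact: exprn_ge0.
Qed.

Lemma cn_le_an n w : 0 <= w -> cn n w <= n%:R ^+ 2 * an n w.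
Proof.
move=> w0; rewrite /cn /an mulr_sumr; apply: ler_sum_nat => j /andP[_ jn].
apply: ler_wpM2r; first exact: exprn_ge0.
by rewrite lerXn2r ?nnegrE ?ler0n // ler_nat -ltnS.
Qed.

Lemma dn_le n w : 1 < w -> 2 <= w ^+ n.+1 -> (w - 1) ^+ 2 * dn n w <= 4 * w * an n w.
Proof.
move=> w1 P2; have w10 : 0 < w - 1 by rewrite subr_gt0.
rewrite -(ler_pM2l w10) mulrA -exprS dn_closed_form.
have -> : (w - 1) * (4 * w * an n w) = 4 * w * ((w - 1) * an n w) by ring.
rewrite an_closed_form.
have K0 : 0 <= (n.+1%:R * w - n%:R) ^+ 2 + w by rewrite addr_ge0 ?sqr_ge0 //; lra.
have wP : w * 2 <= w * w ^+ n.+1 by rewrite ler_wpM2l //; lra.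
nra.
Qed.

Lemma an_cn_sub_bn_sqr_le n w : 1 < w -> 2 <= w ^+ n.+1 ->
  (an n w * cn n w - bn n w ^+ 2) * (w - 1) ^+ 2 <= 4 * (w * an n w ^+ 2).
Proof.
move=> w1 P2; have a0 := an_gt0 n (ltW (lt_trans ltr01 w1)).
(* A variance is at most the second moment about any point, here [n]. *)
have shift : an n w * cn n w - bn n w ^+ 2 <= an n w * dn n w.
  have -> : an n w * dn n w =
      an n w * cn n w - bn n w ^+ 2 + (n%:R * an n w - bn n w) ^+ 2 by rewrite /dn; ring.
  by rewrite lerDl sqr_ge0.
have := ler_wpM2r (sqr_ge0 (w - 1)) shift.
have := ler_wpM2l (ltW a0) (dn_le w1 P2).
nra.
Qed.

Definition majorant n w := n%:R / (Num.sqrt w * (w - 1)).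

Lemma Fn_ge0 n w : 0 < w -> 0 <= Fn n w.
Proof. by move=> w0; rewrite /Fn !mulr_ge0 ?sqrtr_ge0 // invr_ge0 mulr_ge0 ?sqrtr_ge0. Qed.

Lemma Fn_le_majorant n w : 1 < w -> 2 <= w ^+ n.+1 -> Fn n w <= majorant n w.
Proof.
move=> w1 P2; have w0 : 0 < w by lra.
have a0 := an_gt0 n (ltW w0); have w10 : 0 < w - 1 by lra.
have sw0 : 0 < Num.sqrt w by rewrite sqrtr_gt0.
have mean_le : Num.sqrt (cn n w / an n w) <= n%:R.
  rewrite -[leRHS](@ger0_norm _ (n%:R : R)) // -sqrtr_sqr ler_sqrt ?sqr_ge0 //.
  by rewrite ler_pdivrMr // cn_le_an // ltW.
have var_le : Num.sqrt ((an n w * cn n w - bn n w ^+ 2) / (w * an n w ^+ 2))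
    <= 2 / (w - 1).
  rewrite -[leRHS](@ger0_norm _ (2 / (w - 1))); last by rewrite divr_ge0 // ltW.
  rewrite -sqrtr_sqr ler_sqrt ?sqr_ge0 // ler_pdivrMr ?mulr_gt0 ?exprn_gt0 //.
  rewrite expr_div_n mulrAC ler_pdivlMr ?exprn_gt0 //.
  have -> : (2 : R) ^+ 2 = 4 by ring.
  exact: an_cn_sub_bn_sqr_le.
have -> : majorant n w = (2 * Num.sqrt w)^-1 * n%:R * (2 / (w - 1)).
  by rewrite /majorant; field; rewrite !gt_eqF.
by apply: ler_pM => //; rewrite ?invr_ge0 ?mulr_ge0 ?sqrtr_ge0 ?ler_pM2l ?invr_gt0 ?mulr_gt0.
Qed.

Definition majorant_primitive n w :=
  n%:R * (ln (Num.sqrt w - 1) - ln (Num.sqrt w + 1)).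

Lemma is_derive_majorant_primitive n w : 1 < w ->
  is_derive w 1 (majorant_primitive n) (majorant n w).
Proof.
move=> w1; have w0 : 0 < w by lra.
have s1 : 1 < Num.sqrt w by rewrite -sqrtr1 ltr_sqrt //; lra.
have dln (c : R) : 0 < Num.sqrt w + c -> is_derive w 1 (@ln R \o (fun x => Num.sqrt x + c))
    ((Num.sqrt w + c)^-1 * ((2 * Num.sqrt w)^-1 + 0)).
  move=> c0; apply: is_derive1_comp; first exact: is_derive1_ln.
  by apply: is_deriveD; exact: is_derive1_sqrt.
have -> : majorant_primitive n = n%:R \*: ((@ln R \o (fun x => Num.sqrt x + - 1))
    - (@ln R \o (fun x => Num.sqrt x + 1))) by apply/funext => x.
have dm := dln (- 1) ltac:(lra); have dp := dln 1 ltac:(lra).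
apply: is_derive_eq (is_deriveZ n%:R (is_deriveB dm dp)) _.
rewrite /majorant -[_ *: _]/(_ * _); set s := Num.sqrt w in s1 *.
have -> : w = s ^+ 2 by rewrite sqr_sqrtr // ltW.
by field; rewrite !gt_eqF ?subr_gt0 ?addr_gt0 //; nra.
Qed.

Lemma majorant_primitive_bound n w : 1 < w ->
  0 <= - majorant_primitive n w <= 2 * n%:R / (Num.sqrt w - 1).
Proof.
move=> w1; have s1 : 1 < Num.sqrt w by rewrite -sqrtr1 ltr_sqrt //; lra.
set s := Num.sqrt w in s1 *; have s10 : 0 < s - 1 by lra.
have -> : - majorant_primitive n w = n%:R * ln (1 + 2 / (s - 1)).
  rewrite /majorant_primitive -/s -[ln (s + 1)](_ : ln ((s - 1) * (1 + 2 / (s - 1))) = _).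
    have q1 : 0 < 1 + 2 / (s - 1) by rewrite addr_gt0 ?divr_gt0.
    by rewrite lnM ?posrE //; ring.
  by congr ln; field; rewrite gt_eqF.
have q0 : 0 < 2 / (s - 1) by rewrite divr_gt0.
have l0 : 0 <= ln (1 + 2 / (s - 1)) by rewrite ln_ge0 // lerDl ltW.
have l1 : ln (1 + 2 / (s - 1)) <= 2 / (s - 1) by apply: le_ln1Dx; lra.
rewrite mulr_ge0 //= (_ : 2 * n%:R / (s - 1) = n%:R * (2 / (s - 1))); last by ring.
by rewrite ler_wpM2l.
Qed.

Lemma majorant_primitive_cvgy n : majorant_primitive n x @[x --> +oo] --> 0.
Proof.
apply/cvgrPdist_le => e e0; near=> w.
have q0 : 0 <= 2 * n%:R / e by rewrite divr_ge0 // ltW.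
have hw : (1 + 2 * n%:R / e) ^+ 2 + 1 < w by near: w; apply: nbhs_pinfty_gt; rewrite num_real.
have w1 : 1 < w by rewrite (le_lt_trans _ hw) // lerDr sqr_ge0.
have /andP[G0 Gle] := majorant_primitive_bound n w1.
rewrite sub0r normrN ler0_norm -?oppr_ge0 //; apply: le_trans Gle _.
have s1 : 1 + 2 * n%:R / e < Num.sqrt w.
  rewrite -[ltLHS](@ger0_norm _ (1 + 2 * n%:R / e)) ?addr_ge0 //.
  rewrite -sqrtr_sqr ltr_sqrt; last lra.
  by rewrite (lt_trans _ hw) // ltrDl.
rewrite ler_pdivrMr; last lra.
have : 2 * n%:R / e * e = 2 * n%:R by rewrite mulfVK // gt_eqF.
nra.
Unshelve. all: by end_near.
Qed.

Lemma majorant_continuous n w : 1 < w -> {for w, continuous (majorant n)}.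
Proof.
move=> w1; have w0 : 0 < w by lra.
apply: continuousM; first exact: cst_continuous.
apply: continuousV; first by rewrite mulf_neq0 // gt_eqF ?sqrtr_gt0 ?subr_gt0.
apply: continuousM; first exact: sqrt_continuous.
by apply: continuousB; [exact: cvg_id | exact: cst_continuous].
Qed.

Lemma integral_majorant n a : 1 < a ->
  (\int[@lebesgue_measure R]_(w in `[a, +oo[) (majorant n w)%:E =
   (- majorant_primitive n a)%:E)%E.
Proof.
move=> a1; rewrite EFinN -sub0e; apply: ge0_continuous_FTC2y.
- by move=> x ax; rewrite divr_ge0 // mulr_ge0 ?sqrtr_ge0 //; lra.
- apply: continuous_in_subspaceT => x; rewrite inE /= in_itv /= andbT => ax.
  by apply: majorant_continuous; lra.
- exact: majorant_primitive_cvgy.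
- by move=> x ax; have [] := is_derive_majorant_primitive n (lt_trans a1 ax).
- apply: cvg_at_right_filter; apply: differentiable_continuous.
  by apply/derivable1_diffP; have [] := is_derive_majorant_primitive n a1.
- move=> x; rewrite in_itv /= andbT => ax.
  by rewrite derive1E; have [_ ->] := is_derive_majorant_primitive n (lt_trans a1 ax).
Qed.

(* With [s = sqrt (1 + 1/L)], [(s - 1) (s + 1) = 1/L], so
   [(s + 1) / (s - 1) = L (s + 1)^2 <= L^4] as [(s + 1)^2 <= 8 <= L^3]. *)
Lemma majorant_primitive_cutoff_le n (L : R) : 2 <= L ->
  - majorant_primitive n (1 + L^-1) <= 4 * n%:R * ln L.
Proof.
move=> L2; have L0 : 0 < L by lra.
have iL2 : L^-1 <= 2^-1 by rewrite lef_pV2 ?posrE //; lra.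
have iL0 : 0 < L^-1 by rewrite invr_gt0.
have a1 : 1 < 1 + L^-1 by lra.
have sa : 1 < Num.sqrt (1 + L^-1) by rewrite -[ltLHS]sqrtr1 ltr_sqrt //; lra.
have sq : Num.sqrt (1 + L^-1) ^+ 2 = 1 + L^-1 by rewrite sqr_sqrtr // ltW // (lt_trans ltr01).
set s := Num.sqrt (1 + L^-1) in sa sq *.
have sL : (s - 1) * (s + 1) * L = 1.
  have -> : (s - 1) * (s + 1) = s ^+ 2 - 1 by ring.
  by rewrite sq addrAC subrr add0r mulVf // gt_eqF.
have s32 : s <= 3 / 2 by nra.
have L3 : 8 <= L ^+ 3.
  have -> : (8 : R) = 2 ^+ 3 by rewrite -natrX.
  by rewrite lerXn2r ?nnegrE // ltW.
have key : s + 1 <= (s - 1) * L ^+ 4.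
  rewrite -(ler_pM2r (_ : 0 < s + 1)); last lra.
  have -> : (s - 1) * L ^+ 4 * (s + 1) = L ^+ 3 * ((s - 1) * (s + 1) * L) by ring.
  by rewrite sL mulr1; nra.
have lnkey : ln (s + 1) <= ln (s - 1) + 4 * ln L.
  rewrite -[4]/(4%:R) mulr_natl -lnXn // -lnM ?posrE ?exprn_gt0 ?subr_gt0 //.
  by rewrite ler_ln ?posrE ?mulr_gt0 ?exprn_gt0 ?subr_gt0 //; lra.
rewrite /majorant_primitive -/s; have := ler0n R n; nra.
Qed.

Lemma integral_Fn_le n (L : R) : 0 < L <= n%:R ->
  (\int[@lebesgue_measure R]_(w in `[(1 + L^-1)%R, +oo[) (Fn n w)%:E
    <= (- majorant_primitive n (1 + L^-1))%:E)%E.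
Proof.
move=> /andP[L0 Ln]; have iL0 : 0 < L^-1 by rewrite invr_gt0.
rewrite -integral_majorant; last lra.
apply: ge0_le_integral_nomeas => w; rewrite /= in_itv /= andbT => aw.
  by rewrite lee_fin Fn_ge0 //; lra.
have nL : 1 <= n.+1%:R * L^-1 by rewrite -ler_pdivrMr // div1r invrK -natr1; lra.
have P2 : 2 <= w ^+ n.+1.
  have w1 : 0 <= w - 1 by lra.
  have := bernoulli_ineq n.+1 w1; rewrite [1 + (w - 1)]addrC subrK; apply: le_trans.
  have : 0 <= n.+1%:R :> R by []; nra.
by rewrite lee_fin Fn_le_majorant //; lra.
Qed.

End Fn_majorant.

Lemma ln_nat_ge2 (R : realType) n : (16 <= n)%N -> 2 <= ln (n%:R : R).
Proof.
move=> n16; have n0 : (0 : R) < n%:R by rewrite ltr0n (leq_trans _ n16).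
rewrite -[leLHS](expRK 2) ler_ln ?posrE ?expR_gt0 //.
have eh : expR (2^-1 : R) <= 2.
  have h1 : 1 - 2^-1 <= expR (- 2^-1 : R) by exact: expR_ge1Dx.
  have := expRxMexpNx_1 (2^-1 : R); have := expR_gt0 (2^-1 : R); nra.
have -> : (2 : R) = 4%:R * 2^-1 by field.
rewrite expRM_natl (le_trans (_ : _ <= 2 ^+ 4)) //.
  by rewrite lerXn2r // nnegrE ltW ?expR_gt0.
by rewrite -natrX ler_nat.
Qed.

Theorem proposition3p3 (R : realType) :
  exists C : R, exists N : nat, forall n : nat, (N <= n)%N ->
    (\int[@lebesgue_measure R]_(w in `[(1 + (ln (n%:R : R))^-1)%R, +oo[%classic)
        (Fn n w)%:E <= (C * n%:R * ln (ln (n%:R : R)))%:E)%E.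
Proof.
exists 4, 16%N => n n16.
have L2 : 2 <= ln (n%:R : R) by exact: ln_nat_ge2.
have Ln : ln (n%:R : R) <= n%:R by rewrite ltW // ln_sublinear // ltr0n (leq_trans _ n16).
apply: le_trans (integral_Fn_le _) _; first by rewrite Ln andbT; lra.
by rewrite lee_fin majorant_primitive_cutoff_le.
Qed.
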